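(* A permutation $w \in \mathfrak{S}_n$ is a prism if and only if there exists $i \in \textsf{supp}(w)$ that is unconfined in the reduced words of $w$; that is, if and only if there exist a letter $i$ and a reduced word $s$ of $w$ such that $i$ appears exactly once in $s$, and this occurrence of $i$ lies neither between two occurrences of $i+1$ nor between two occurrences of $i-1$ in $s$.
   Context: $\sigma_i$ ($1\le i\le n-1$) is the simple transposition swapping $i$ and $i+1$; products are compositions of maps. A reduced word of $w$ is a word $i_1\cdots i_\ell$ of minimal length with $w=\sigma_{i_1}\cdots\sigma_{i_\ell}$. $\textsf{supp}(w)$ is the set of letters appearing in (any) reduced word of $w$. Bruhat order: $u \preceq w$ iff some reduced word of $u$ is a subword of some reduced word of $w$; $B(w)=\{u:u\preceq w\}$. A permutation $w$ is a prism if $B(w) \cong \mathbf{2} \times X$ as posets for some poset $X$, where $\mathbf{2}$ is the two-element chain (equivalently, $B(w)\cong B\times X$ for some nontrivial boolean algebra $B$). *)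

From mathcomp Require Import all_boot all_order all_fingroup.
Set Implicit Arguments. Unset Strict Implicit. Unset Printing Implicit Defensive.
Local Open Scope group_scope.

(* Letters are 1-indexed as in the paper: letter i (1 <= i <= n-1) is the
   simple transposition swapping the (1-indexed) values i and i+1, i.e. the
   ordinals i-1 and i of 'I_n. Out-of-range letters are mapped to 1 but are
   never used (words are required to be valid). *)
Definition sigma (n i : nat) : {perm 'I_n} :=
  match (insub i.-1 : option 'I_n), (insub i : option 'I_n) with
  | Some a, Some b => if 0 < i then tperm a b else 1
  | _, _ => 1
  end.

Definition valid_word (n : nat) (s : seq nat) : bool :=
  all (fun i => (0 < i) && (i < n)) s.

(* word_perm [:: i1; ...; il] = sigma_i1 o ... o sigma_il as maps
   (mathcomp's (p * q) x = q (p x)). *)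
Definition word_perm (n : nat) (s : seq nat) : {perm 'I_n} :=
  foldr (fun i p => p * sigma n i) 1 s.

Definition reduced_word (n : nat) (w : {perm 'I_n}) (s : seq nat) : Prop :=
  [/\ valid_word n s, word_perm n s = w &
      forall t, valid_word n t -> word_perm n t = w -> size s <= size t].

Definition bruhat (n : nat) (u w : {perm 'I_n}) : Prop :=
  exists su sw, [/\ reduced_word u su, reduced_word w sw & subseq su sw].

Definition Bint (n : nat) (w : {perm 'I_n}) : Type := {u : {perm 'I_n} | bruhat u w}.

Definition is_partial_order (X : Type) (le : X -> X -> Prop) : Prop :=
  [/\ forall x, le x x,
      forall x y, le x y -> le y x -> x = y &
      forall x y z, le x y -> le y z -> le x z].

Definition le2 (a b : bool) : Prop := a ==> b.

Definition prism (n : nat) (w : {perm 'I_n}) : Prop :=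
  exists (X : Type) (leX : X -> X -> Prop) (f : Bint w -> bool * X),
    [/\ is_partial_order leX, bijective f &
        forall u v : Bint w,
          bruhat (sval u) (sval v) <-> (le2 (f u).1 (f v).1 /\ leX (f u).2 (f v).2)].

Definition between (s : seq nat) (p j : nat) : Prop :=
  exists a b, [/\ a < p < b, b < size s, nth 0 s a = j & nth 0 s b = j].

Definition unconfined_in (s : seq nat) (i : nat) : Prop :=
  [/\ (count_mem i s = 1)%N,
      ~ between s (index i s) i.+1 &
      ~ between s (index i s) i.-1].

From mathcomp Require Import all_boot all_fingroup.
From mathcomp Require Import zify.
From Stdlib Require Import ProofIrrelevance IndefiniteDescription.
Set Implicit Arguments. Unset Strict Implicit. Unset Printing Implicit Defensive.
Local Open Scope group_scope.

(* Bruhat order on S_n is the tableau order: u <= w iff rk u P v <= rk w P v for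
   all P, v, where rk u P v counts the positions Q < P with u Q >= v; and then
   every reduced word of w contains a reduced word of u as a subword.

   If B(w) = 2 x X, let s_i be an atom sent to (1, bottom). For a neighbour k of
   i, the join of s_i and s_k in 2 x X lies below every common upper bound in
   B(w); if both i k and k i were subwords of a reduced word of w, it would be
   equal to both s_i s_k and s_k s_i. So no reduced word of w contains both,
   which forbids a second i (the letters between two i's would commute with s_i
   and the two i's would cancel) and an i between two copies of a neighbour.

   Conversely, let s = x i y with i unconfined and let J be the permutations
   stabilising {0, ..., i-1}. Inserting i into a subword x' y' of x y multiplies
   p = word_perm (x' y') in J by a transposition which adds to the rank function
   of p a rectangle with a corner in row or column i. Hence
   (b, p) |-> (if b then raise p else p) is an isomorphism 2 x (B(w) ∩ J) -> B(w). *)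

Lemma sum_lt_ord (m P : nat) : (\sum_(i < m) (i < P : nat) = minn P m)%N.
Proof.
elim: m => [|m IH]; first by rewrite big_ord0; lia.
by rewrite big_ord_recr /= IH; case: (ltnP m P) => /=; lia.
Qed.

Lemma sum_agree_off2 (I : finType) (F G : I -> nat) (q1 q2 : I) :
  q1 != q2 -> (forall x, x != q1 -> x != q2 -> F x = G x) ->
  (\sum_x F x + G q1 + G q2 = \sum_x G x + F q1 + F q2)%N.
Proof.
move=> q12 FG; have q21 : q2 != q1 by rewrite eq_sym.
rewrite (bigD1 q1) // (bigD1 q2) // [in RHS](bigD1 q1) // [in RHS](bigD1 q2) //=.
rewrite (eq_bigr G); first by lia.
by move=> x /andP[xq1 xq2]; apply: FG.
Qed.

(** * Inversions and reduced words *)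

Section Words.
Variable n : nat.
Implicit Types (u w : {perm 'I_n}) (s t : seq nat).

Lemma sigmaE k (a b : 'I_n) :
  0 < k -> a = k.-1 :> nat -> b = k :> nat -> sigma n k = tperm a b.
Proof.
move=> k_gt0 ea eb; rewrite /sigma k_gt0.
have -> : (insub k.-1 : option 'I_n) = Some a by rewrite -ea valK.
by have -> : (insub k : option 'I_n) = Some b by rewrite -eb valK.
Qed.

Lemma sigma_tperm k : 0 < k < n -> exists a b : 'I_n,
  [/\ a = k.-1 :> nat, b = k :> nat, b = a.+1 :> nat & sigma n k = tperm a b].
Proof.
case/andP=> k_gt0 kn; have k1n : k.-1 < n by lia.
by exists (Ordinal k1n), (Ordinal kn); split => //=; [lia | apply: sigmaE].
Qed.

Lemma sigmaK k : sigma n k * sigma n k = 1.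
Proof.
rewrite /sigma; case: (insub k.-1 : option 'I_n) => [a|]; last by rewrite mulg1.
case: (insub k : option 'I_n) => [b|]; last by rewrite mulg1.
by case: (0 < k); rewrite ?tperm2 ?mulg1.
Qed.

Lemma sigma_val k (x : 'I_n) : 0 < k < n ->
  sigma n k x = (if x == k.-1 :> nat then k else if x == k :> nat then k.-1 else x) :> nat.
Proof.
move=> kv; have [a [b [ea eb eab ->]]] := sigma_tperm kv.
case: tpermP => [->|->|/eqP xa /eqP xb].
- by rewrite -ea eqxx.
- by rewrite -eb eqxx eab ifN //; lia.
- by rewrite -ea -eb !(inj_eq val_inj) (negPf xa) (negPf xb).
Qed.

Lemma sigma_inj k l : 0 < k < n -> 0 < l < n -> sigma n k = sigma n l -> k = l.
Proof.
move=> kv lv ekl; have x_lt_n : k.-1 < n by lia.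
have := sigma_val (Ordinal x_lt_n) kv; rewrite ekl sigma_val //= eqxx.
by move: kv lv; repeat case: eqP => //=; lia.
Qed.

Definition adjacent (k l : nat) := (l == k.+1) || (k == l.+1).

Lemma adjacentC k l : adjacent k l = adjacent l k.
Proof. exact: orbC. Qed.

Lemma sigmaC k l : 0 < k < n -> 0 < l < n -> k != l -> ~~ adjacent k l ->
  sigma n k * sigma n l = sigma n l * sigma n k.
Proof.
move=> kv lv kl /norP[lk1 kl1]; apply/permP => x; apply: val_inj; rewrite !permM /=.
rewrite (sigma_val _ kv) (sigma_val x lv) (sigma_val _ lv) (sigma_val x kv).
by move: kl lk1 kl1 kv lv; repeat case: eqP => //=; lia.
Qed.

Lemma word_perm_cat s t : word_perm n (s ++ t) = word_perm n t * word_perm n s.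
Proof. by elim: s => [|k s IH] /=; rewrite ?mulg1 // IH mulgA. Qed.

Lemma word_perm_rcons s k : word_perm n (rcons s k) = sigma n k * word_perm n s.
Proof. by rewrite -cats1 word_perm_cat /= mul1g. Qed.

Lemma word_perm1 k : word_perm n [:: k] = sigma n k.
Proof. exact: mul1g. Qed.

Lemma word_perm2 k l : word_perm n [:: k; l] = sigma n l * sigma n k.
Proof. by rewrite /= mul1g. Qed.

Lemma valid_word_cat s t : valid_word n (s ++ t) = valid_word n s && valid_word n t.
Proof. exact: all_cat. Qed.

Lemma valid_word_rcons s k : valid_word n (rcons s k) = valid_word n s && (0 < k < n).
Proof. by rewrite /valid_word all_rcons andbC. Qed.

Lemma valid_word_subseq s t : subseq t s -> valid_word n s -> valid_word n t.
Proof. by move=> ts /allP vs; apply/allP => k /(mem_subseq ts) /vs. Qed.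

Definition ninv u : nat := \sum_(p : 'I_n * 'I_n) ((p.1 < p.2) && (u p.2 < u p.1)).

Lemma ninv1 : ninv 1 = 0.
Proof. by apply: big1 => p _; rewrite !perm1; case: ltngtP. Qed.

(* [tperm a b * u] is [u] with the entries at positions [a] and [b] exchanged,
   since [(p * q) x = q (p x)]. *)
Lemma ninv_tperm u (a b : 'I_n) : b = a.+1 :> nat ->
  ninv (tperm a b * u) + (u b < u a) = ninv u + (u a < u b).
Proof.
move=> eab; have ab : a != b by apply/eqP => ab; move: eab; rewrite ab; lia.
set t := tperm a b.
have -> : ninv (t * u) = \sum_(p : 'I_n * 'I_n) ((t p.1 < t p.2) && (u p.2 < u p.1)).
  rewrite /ninv (reindex_inj (h := fun p : 'I_n * 'I_n => (t p.1, t p.2))) /=.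
    by apply: eq_bigr => p _; rewrite !permM !tpermK.
  by move=> [x1 x2] [y1 y2] [] /perm_inj -> /perm_inj ->.
have ab_ba : (a, b) != (b, a) by rewrite xpair_eqE negb_and ab.
have := @sum_agree_off2 _ (fun p : 'I_n * 'I_n => (t p.1 < t p.2) && (u p.2 < u p.1))
  (fun p : 'I_n * 'I_n => (p.1 < p.2) && (u p.2 < u p.1)) _ _ ab_ba.
rewrite /= /t tpermL tpermR.
have [-> ->] : (a < b) = true /\ (b < a) = false by rewrite eab; lia.
rewrite !addn0 => -> //.
move=> [x y]; rewrite !xpair_eqE !negb_and /= -!(inj_eq val_inj) => xy1 xy2.
congr (_ && _); rewrite !permE /=.
by move: xy1 xy2; rewrite -!(inj_eq val_inj); repeat case: eqP => //=; lia.
Qed.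

Lemma ninv_sigmaM k u : 0 < k < n -> ninv (sigma n k * u) <= (ninv u).+1.
Proof.
move=> kv; have [a [b [_ _ eab ->]]] := sigma_tperm kv.
have := ninv_tperm u eab; set m := ninv _.
by case: (u b < u a); case: (u a < u b) => /=; lia.
Qed.

Lemma ninv_word s : valid_word n s -> ninv (word_perm n s) <= size s.
Proof.
elim/last_ind: s => [|s k IH]; first by rewrite ninv1.
rewrite valid_word_rcons word_perm_rcons size_rcons => /andP[vs kv].
by apply: leq_trans (ninv_sigmaM _ kv) _; rewrite ltnS IH.
Qed.

Lemma incr_perm_eq1 u : (forall a b : 'I_n, b = a.+1 :> nat -> u a < u b) -> u = 1.
Proof.
move=> asc.
have incr (v : {perm 'I_n}) :
    (forall x y : 'I_n, x < y -> v x < v y) -> forall x : 'I_n, x <= v x.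
  move=> v_incr x; suff H m (y : 'I_n) : y = m :> nat -> m <= v y by apply: H.
  elim: m y => [|m IH] y ey //; have m_lt_n : m < n by have := ltn_ord y; lia.
  have := IH (Ordinal m_lt_n) erefl; have := v_incr (Ordinal m_lt_n) y.
  by rewrite ey /= => /(_ (ltnSn m)); lia.
have u_incr : forall x y : 'I_n, x < y -> u x < u y.
  move=> x y; suff H d (z : 'I_n) : z = x + d.+1 :> nat -> u x < u z.
    by move=> xy; apply: (H (y - x.+1)); lia.
  elim: d z => [|d IH] z ez; first by apply: asc; lia.
  have z'_lt_n : x + d.+1 < n by have := ltn_ord z; lia.
  by apply: ltn_trans (IH (Ordinal z'_lt_n) erefl) (asc _ _ _) => /=; lia.
have uV_incr : forall x y : 'I_n, x < y -> u^-1 x < u^-1 y.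
  move=> x y xy; case: ltngtP => // [/u_incr | /val_inj/perm_inj exy].
    by rewrite !permKV => yx; move: (ltn_trans xy yx); rewrite ltnn.
  by move: xy; rewrite exy ltnn.
apply/permP => x; apply/val_inj/eqP; rewrite perm1 eqn_leq (incr _ u_incr) andbT.
by have := incr _ uV_incr (u x); rewrite permK.
Qed.

Lemma adjacent_descent u : u != 1 -> exists a b : 'I_n, b = a.+1 :> nat /\ u b < u a.
Proof.
move=> u1.
have [|no_descent] := boolP [exists a : 'I_n, exists b : 'I_n, (b == a.+1 :> nat) && (u b < u a)].
  by case/existsP => a /existsP[b /andP[/eqP eab uba]]; exists a, b.
case/eqP: u1; apply: incr_perm_eq1 => a b eab.
case: ltngtP => // [uba | /val_inj/perm_inj ab]; last by move: eab; rewrite ab; lia.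
by case/negP: no_descent; apply/existsP; exists a; apply/existsP; exists b; rewrite eab eqxx.
Qed.

Lemma word_ninv u : exists s, [/\ valid_word n s, word_perm n s = u & size s = ninv u].
Proof.
have [m] := ubnP (ninv u); elim: m u => // m IH u ltum.
have [->|u1] := eqVneq u 1; first by exists [::]; rewrite ninv1.
have [a [b [eab uba]]] := adjacent_descent u1.
have bv : 0 < b < n by rewrite ltn_ord eab.
have sb : sigma n b = tperm a b by apply: sigmaE; rewrite ?eab.
have ninv_tu : (ninv (tperm a b * u)).+1 = ninv u.
  by have := ninv_tperm u eab; rewrite uba ltnNge (ltnW uba) addn1 addn0.
have [s [vs ws ss]] := IH (tperm a b * u) (ltac:(by rewrite -ltnS ninv_tu)).
exists (rcons s b); rewrite valid_word_rcons vs bv word_perm_rcons ws sb mulgA tperm2 mul1g.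
by rewrite size_rcons ss ninv_tu.
Qed.

Lemma reduced_wordE w s :
  reduced_word w s <-> [/\ valid_word n s, word_perm n s = w & size s = ninv w].
Proof.
split=> [[vs ws s_min] | [vs ws ss]].
  split=> //; apply/eqP; rewrite eqn_leq -{2}ws ninv_word // andbT.
  by have [t [vt wt <-]] := word_ninv w; apply: s_min.
by split=> // t vt wt; rewrite ss -wt ninv_word.
Qed.

Lemma reduced_word_exists w : exists s, reduced_word w s.
Proof. by have [s ?] := word_ninv w; exists s; apply/reduced_wordE. Qed.

End Words.

(** * The tableau criterion for Bruhat order *)

Lemma subseq_catP (T : eqType) (t x y : seq T) : subseq t (x ++ y) ->
  exists x' y', [/\ t = x' ++ y', subseq x' x & subseq y' y].
Proof.
case/subseqP => m; rewrite size_cat => sm ->.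
exists (mask (take (size x) m) x), (mask (drop (size x) m) y).
rewrite -mask_cat ?cat_take_drop ?mask_subseq //.
by rewrite size_takel // sm leq_addr.
Qed.

Lemma subseq_consP (T : eqType) (t y : seq T) c : subseq t (c :: y) ->
  subseq t y \/ exists2 t', t = c :: t' & subseq t' y.
Proof.
case: t => [|d t] /=; first by left; rewrite sub0seq.
by case: eqP => [-> ts | _ ts]; [right; exists t | left].
Qed.

Lemma subseq_rconsP (T : eqType) (t s : seq T) k : subseq t (rcons s k) ->
  subseq t s \/ exists2 t', t = rcons t' k & subseq t' s.
Proof.
rewrite -cats1 => /subseq_catP [t1 [t2 [-> ts1 /subseq_consP [|[t3 -> ]]]]].
  by rewrite subseq0 => /eqP ->; left; rewrite cats0.
by rewrite subseq0 => /eqP ->; right; exists t1; rewrite ?cats1.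
Qed.

Section Tableau.
Variable n : nat.
Implicit Types (u w : {perm 'I_n}) (s t : seq nat).

Definition rk u (P v : nat) : nat := \sum_(Q : 'I_n) ((Q < P) && (v <= u Q)).

Definition rk_le u w := forall P v, rk u P v <= rk w P v.

Lemma rk_le_refl u : rk_le u u.
Proof. by []. Qed.

Lemma rk_le_trans u1 u2 u3 : rk_le u1 u2 -> rk_le u2 u3 -> rk_le u1 u3.
Proof. by move=> h12 h23 P v; apply: leq_trans (h12 P v) (h23 P v). Qed.

Lemma rkS u (Q : 'I_n) v : rk u Q.+1 v = rk u Q v + (v <= u Q).
Proof.
rewrite /rk (bigD1 Q) //= [in RHS](bigD1 Q) //= ltnSn ltnn addnC; congr (_ + _).
by apply: eq_bigr => R RQ; rewrite ltnS leq_eqVlt (negPf (RQ : (R : nat) != Q)).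
Qed.

Lemma rk_le_anti u w : rk_le u w -> rk_le w u -> u = w.
Proof.
move=> uw wu; apply/permP => x; apply/val_inj/eqP.
have ge_eq v : (v <= u x) = (v <= w x).
  have := uw x v; have := wu x v; have := uw x.+1 v; have := wu x.+1 v.
  by rewrite !rkS; case: (v <= u x); case: (v <= w x) => /=; lia.
by rewrite eqn_leq ge_eq leqnn -ge_eq leqnn.
Qed.

Lemma rk_tperm u (a b : 'I_n) P v : b = a.+1 :> nat -> P != b :> nat ->
  rk (tperm a b * u) P v = rk u P v.
Proof.
move=> eab Pb; rewrite /rk (reindex_inj (@perm_inj _ (tperm a b))) /=.
apply: eq_bigr => Q _; rewrite permM tpermK; congr (_ && _).
by case: tpermP => [->|->|//]; move: Pb; rewrite eab; case: eqP; lia.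
Qed.

Lemma rk_tperm_at u (a b : 'I_n) v : b = a.+1 :> nat ->
  rk (tperm a b * u) b v = rk u a v + (v <= u b).
Proof.
move=> eab; rewrite eab rkS rk_tperm ?permM ?tpermL //.
by rewrite eab; apply/eqP; lia.
Qed.

(* The lifting property of Bruhat order. *)
Lemma rk_le_tperm_up u w (a b : 'I_n) : b = a.+1 :> nat -> w a < w b -> rk_le u w ->
  rk_le u (tperm a b * w) /\ rk_le (tperm a b * u) (tperm a b * w).
Proof.
move=> eab wab uw; split=> P v;
  (have [->|Pb] := eqVneq P b; last by rewrite ?rk_tperm //; apply: uw).
all: have := uw a v; have := uw b.+1 v; rewrite ?rk_tperm_at // !rkS eab !rkS.
all: by case: (leqP v (u a)); case: (leqP v (u b)); case: (leqP v (w a));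
  case: (leqP v (w b)) => /=; lia.
Qed.

Lemma rk_le_tperm_down u w (a b : 'I_n) : b = a.+1 :> nat -> w b < w a -> rk_le u w ->
  (u a < u b -> rk_le u (tperm a b * w)) /\
  (u b < u a -> rk_le (tperm a b * u) (tperm a b * w)).
Proof.
move=> eab wba uw; split=> uab P v;
  (have [->|Pb] := eqVneq P b; last by rewrite ?rk_tperm //; apply: uw).
all: have := uw a v; have := uw b.+1 v; rewrite ?rk_tperm_at // !rkS eab !rkS.
all: by case: (leqP v (u a)); case: (leqP v (u b)); case: (leqP v (w a));
  case: (leqP v (w b)) => /=; lia.
Qed.

Lemma reduced_rcons w s k : reduced_word w (rcons s k) -> exists a b : 'I_n,
  [/\ b = a.+1 :> nat, sigma n k = tperm a b, w = tperm a b * word_perm n s,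
      word_perm n s a < word_perm n s b & reduced_word (word_perm n s) s].
Proof.
case/reduced_wordE; rewrite valid_word_rcons word_perm_rcons size_rcons.
case/andP=> vs kv <- ss; have [a [b [_ _ eab sk]]] := sigma_tperm kv.
exists a, b; rewrite sk in ss *; set W := word_perm n s in ss *.
have := ninv_tperm W eab; have := ninv_word vs; rewrite -/W -ss.
case: (ltngtP (W a) (W b)) => [Wab | Wba | /val_inj/perm_inj ab] /=.
- by move=> ninvW ninv_tW; split=> //; apply/reduced_wordE; split=> //; lia.
- by lia.
- by move: eab; rewrite ab; lia.
Qed.

Lemma subword_rk_le w s t : reduced_word w s -> subseq t s -> rk_le (word_perm n t) w.
Proof.
elim/last_ind: s w t => [|s k IH] w t rs.
  by rewrite subseq0 => /eqP ->; case: rs => _ <- _; apply: rk_le_refl.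
have [a [b [eab sk -> Wab rs']]] := reduced_rcons rs.
case/subseq_rconsP => [ts | [t' -> ts]].
  exact: (rk_le_tperm_up eab Wab (IH _ _ rs' ts)).1.
by rewrite word_perm_rcons sk; apply: (rk_le_tperm_up eab Wab (IH _ _ rs' ts)).2.
Qed.

Lemma rk_le1 u : rk_le 1 u.
Proof. by have [s rs] := reduced_word_exists u; apply: (subword_rk_le rs (sub0seq s)). Qed.

Lemma rk_le_subword w s u : reduced_word w s -> rk_le u w ->
  exists2 t, subseq t s & reduced_word u t.
Proof.
elim/last_ind: s w u => [|s k IH] w u rs uw.
  have w1 : w = 1 by case: rs => _ <-.
  have -> : u = 1 by apply: rk_le_anti; [rewrite -w1 | apply: rk_le1].
  by exists [::]; last by apply/reduced_wordE; rewrite ninv1.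
have kv : 0 < k < n by case/reduced_wordE: rs; rewrite valid_word_rcons => /andP[_ ->].
have [a [b [eab sk ew Wab rs']]] := reduced_rcons rs.
have tw : tperm a b * w = word_perm n s by rewrite ew mulgA tperm2 mul1g.
have wba : w b < w a by rewrite ew !permM tpermL tpermR.
have [up down] := rk_le_tperm_down eab wba uw; rewrite tw in up down.
case: (ltngtP (u a) (u b)) => [uab | uba | /val_inj/perm_inj ab].
- have [t ts rt] := IH _ _ rs' (up uab).
  by exists t => //; apply: subseq_trans ts (subseq_rcons s k).
- have [t ts /reduced_wordE[vt wt st]] := IH _ _ rs' (down uba).
  exists (rcons t k); first by rewrite -!cats1 subseq_cat2r.
  apply/reduced_wordE; split; first by rewrite valid_word_rcons vt kv.
    by rewrite word_perm_rcons wt sk mulgA tperm2 mul1g.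
  have := ninv_tperm u eab; rewrite size_rcons st uba ltnNge (ltnW uba).
  by set m := ninv _ => /=; lia.
- by move: eab; rewrite ab; lia.
Qed.

Lemma bruhatE u w : bruhat u w <-> rk_le u w.
Proof.
split=> [[su [sw [ru rw sub]]] | uw].
  by case: (ru) => _ <- _; apply: subword_rk_le rw sub.
have [sw rw] := reduced_word_exists w; have [su sub ru] := rk_le_subword rw uw.
by exists su, sw.
Qed.

End Tableau.

(** * A prism has an unconfined letter *)

Lemma split_first (T : eqType) (x : T) s : x \in s ->
  exists p1 p2, s = p1 ++ x :: p2 /\ x \notin p1.
Proof.
move=> xs; exists (take (index x s) s), (drop (index x s).+1 s).
by rewrite -drop_index // cat_take_drop in_take // ltnn.
Qed.

Lemma between_mem s1 s2 (x k : nat) : between (s1 ++ x :: s2) (size s1) k ->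
  k \in s1 /\ k \in s2.
Proof.
case=> a [b [/andP[ha hb] hbs ea eb]]; split.
  by rewrite -ea nth_cat ha mem_nth.
rewrite -eb nth_cat ltnNge ltnW //=; case E: (b - size s1) => [|c]; first by lia.
by rewrite /= mem_nth //; move: hbs; rewrite size_cat /=; lia.
Qed.

Lemma mem_between s1 s2 (x k : nat) : k \in s1 -> k \in s2 ->
  between (s1 ++ x :: s2) (size s1) k.
Proof.
move=> ks1 ks2; exists (index k s1), (size s1 + (index k s2).+1); split.
- by rewrite index_mem ks1 /=; lia.
- by rewrite size_cat /= ltn_add2l ltnS index_mem.
- by rewrite nth_cat index_mem ks1 nth_index.
- by rewrite nth_cat ltnNge leq_addr /= addKn /= nth_index.
Qed.

Section SimpleReflections.
Variable n : nat.

Lemma ninv_sigma k : 0 < k < n -> ninv (sigma n k) = 1%N.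
Proof.
move=> kv; have [a [b [_ _ eab ->]]] := sigma_tperm kv.
by have := ninv_tperm 1 eab; rewrite mulg1 !perm1 ninv1 eab ltnSn; set m := ninv _; lia.
Qed.

Lemma reduced_sigma k : 0 < k < n -> reduced_word (sigma n k) [:: k].
Proof. by move=> kv; apply/reduced_wordE; rewrite word_perm1 ninv_sigma //= /valid_word /= kv. Qed.

Lemma sigma_neq1 k : 0 < k < n -> sigma n k != 1.
Proof. by move=> kv; apply/eqP => e; have := ninv_sigma kv; rewrite e ninv1. Qed.

Lemma reduced_adjacent k l : 0 < k < n -> 0 < l < n -> adjacent k l ->
  reduced_word (word_perm n [:: k; l]) [:: k; l].
Proof.
move=> kv lv kl; apply/reduced_wordE; split=> //; first by rewrite /valid_word /= kv lv.
rewrite word_perm2; have [a [b [ea eb eab ->]]] := sigma_tperm lv.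
have := ninv_tperm (sigma n k) eab; rewrite ninv_sigma // !sigma_val // ea eb /=.
set m := ninv _; move: kv lv; case/orP: kl => /eqP ->;
  by repeat case: eqP => //=; lia.
Qed.

Lemma adjacent_noncomm k l : 0 < k < n -> 0 < l < n -> adjacent k l ->
  sigma n l * sigma n k != sigma n k * sigma n l.
Proof.
move=> kv lv kl; apply/eqP => e; have z_lt_n : k.-1 < n by lia.
have := congr1 (fun p : {perm 'I_n} => val (p (Ordinal z_lt_n))) e.
rewrite /= !permM !sigma_val //=; move: kv lv; case/orP: kl => /eqP ->;
  by repeat case: eqP => //=; lia.
Qed.

Lemma rk_le_sigma k l : 0 < k < n -> 0 < l < n -> rk_le (sigma n l) (sigma n k) -> l = k.
Proof.
move=> kv lv lk; have [t] := rk_le_subword (reduced_sigma kv) lk.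
case/subseq_consP => [|[t' ->]]; rewrite subseq0 => /eqP -> /reduced_wordE[_ e _].
  by move: (sigma_neq1 lv); rewrite -e eqxx.
by apply: (@sigma_inj n) => //; rewrite -e word_perm1.
Qed.

Lemma rk_le_sigma_word2 k l : 0 < k < n -> 0 < l < n -> adjacent k l ->
  rk_le (sigma n k) (word_perm n [:: k; l]) /\ rk_le (sigma n l) (word_perm n [:: k; l]).
Proof.
move=> kv lv kl; rewrite -!word_perm1; have rkl := reduced_adjacent kv lv kl.
by split; apply: (subword_rk_le rkl); rewrite sub1seq !inE eqxx ?orbT.
Qed.

Lemma rk_le_adjacent_top k l j : 0 < k < n -> 0 < l < n -> adjacent k l ->
  rk_le (sigma n k) j -> rk_le (sigma n l) j -> rk_le j (word_perm n [:: k; l]) ->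
  j = word_perm n [:: k; l].
Proof.
move=> kv lv kl kj lj jkl; have [t] := rk_le_subword (reduced_adjacent kv lv kl) jkl.
have kNl : k != l by apply: contraTneq kl => ->; rewrite /adjacent; lia.
case/subseq_consP => [/subseq_consP[|[t' ->]] | [t' -> /subseq_consP[|[t'' ->]]]];
  rewrite subseq0 => /eqP -> /reduced_wordE[_ ej _]; subst j; rewrite //=.
all: move: kj lj; rewrite /= ?mul1g => kj lj.
- by move: (sigma_neq1 kv); rewrite (rk_le_anti kj (rk_le1 _)) eqxx.
- by move: kNl; rewrite (rk_le_sigma lv kv kj) eqxx.
- by move: kNl; rewrite (rk_le_sigma kv lv lj) eqxx.
Qed.

Lemma word_perm_cancel p1 m p3 i : 0 < i < n -> valid_word n m -> i \notin m ->
  ~~ has (adjacent i) m -> word_perm n (p1 ++ i :: m ++ i :: p3) = word_perm n (p1 ++ m ++ p3).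
Proof.
move=> iv vm im far.
have comm : sigma n i * word_perm n m = word_perm n m * sigma n i.
  elim: m vm im far => [|l m IH] /=; first by rewrite mulg1 mul1g.
  rewrite inE negb_or => /andP[lv vm] /andP[il im] /norP[il_far far].
  by rewrite mulgA IH // -!mulgA sigmaC // eq_sym.
rewrite !word_perm_cat /= !word_perm_cat /= -!mulgA; congr (_ * _).
by rewrite !mulgA comm -(mulgA (word_perm n m)) sigmaK mulg1.
Qed.

End SimpleReflections.

Lemma subseq2_cat (T : eqType) (a b : T) s1 s2 : a \in s1 -> b \in s2 ->
  subseq [:: a; b] (s1 ++ s2).
Proof. by move=> a1 b2; rewrite -[[:: a; b]]/([:: a] ++ [:: b]) cat_subseq ?sub1seq. Qed.

Section BraidFree.
Variables (n : nat) (w : {perm 'I_n}) (s : seq nat) (i : nat).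
Hypotheses (rs : reduced_word w s) (i_s : i \in s).
Hypothesis braid_free :
  forall k, adjacent i k -> subseq [:: i; k] s -> subseq [:: k; i] s -> False.

Lemma count_mem_braid_free : count_mem i s = 1%N.
Proof.
have [p1 [p2 [es ip1]]] := split_first i_s.
suff ip2 : i \notin p2 by rewrite es count_cat /= eqxx (count_memPn ip1) (count_memPn ip2).
apply/negP => /split_first [m [p3 [ep2 im]]]; rewrite {p2}ep2 in es.
case: (rs) => vs ws s_min; have iv : 0 < i < n := allP vs i i_s.
move: (vs); rewrite es /valid_word !all_cat /= all_cat /=.
move=> /andP[vp1 /andP[_ /andP[vm /andP[_ vp3]]]].
case: (boolP (has (adjacent i) m)) => [/hasP[k km ik] | far].
  apply: (braid_free ik); rewrite es.
    by rewrite -cat_rcons subseq2_cat // ?mem_rcons ?mem_head // mem_cat km.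
  have -> : p1 ++ i :: m ++ i :: p3 = (p1 ++ i :: m) ++ i :: p3 by rewrite -catA.
  by rewrite subseq2_cat // ?mem_head // mem_cat inE km !orbT.
(* the letters between the two copies of i commute with s_i, so these cancel *)
have := s_min (p1 ++ m ++ p3); rewrite es !size_cat /= size_cat /= -ws es word_perm_cancel //.
by rewrite /valid_word !all_cat vp1 vm vp3 => /(_ isT erefl); lia.
Qed.

Lemma not_between_braid_free k : adjacent i k -> ~ between s (index i s) k.
Proof.
move=> ik; have [p1 [p2 [es ip1]]] := split_first i_s.
have -> : index i s = size p1 by rewrite es index_cat (negPf ip1) /= eqxx addn0.
rewrite es => /between_mem [kp1 kp2]; apply: (braid_free ik); rewrite es.
  by rewrite -cat_rcons subseq2_cat // mem_rcons mem_head.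
by rewrite subseq2_cat // mem_head.
Qed.

Lemma unconfined_braid_free : unconfined_in s i.
Proof.
have i_gt0 : 0 < i by case: rs => /allP/(_ i i_s)/andP[].
split; first exact: count_mem_braid_free.
  by apply: not_between_braid_free; rewrite /adjacent eqxx.
by apply: not_between_braid_free; rewrite /adjacent prednK // eqxx orbT.
Qed.

End BraidFree.

Lemma mem_reduced_rk_le_sigma n (w : {perm 'I_n}) s i :
  reduced_word w s -> 0 < i < n -> rk_le (sigma n i) w -> i \in s.
Proof.
move=> rs iv iw; have [t ts /reduced_wordE[vt wt]] := rk_le_subword rs iw.
rewrite ninv_sigma //; case: t ts vt wt => [|l [|//]] //= ts /andP[lv _].
by rewrite mul1g => e _; rewrite -(sigma_inj lv iv e) -sub1seq.
Qed.

Definition Bint_of n (w u : {perm 'I_n}) (uw : rk_le u w) : Bint w :=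
  exist _ u (proj2 (bruhatE u w) uw).

Lemma sval_inj (T : Type) (P : T -> Prop) : injective (@sval T P).
Proof. by move=> [u hu] [v hv] /= e; apply: subset_eq_compat. Qed.

Section PrismAtom.
Variables (n : nat) (w : {perm 'I_n}) (X : Type) (leX : X -> X -> Prop).
Variables (f : Bint w -> bool * X) (g : bool * X -> Bint w).
Hypotheses (leX_order : is_partial_order leX) (fK : cancel f g) (gK : cancel g f).
Hypothesis f_iso : forall u v : Bint w,
  bruhat (sval u) (sval v) <-> le2 (f u).1 (f v).1 /\ leX (f u).2 (f v).2.

Lemma f_rk_le u v :
  rk_le (sval u) (sval v) <-> le2 (f u).1 (f v).1 /\ leX (f u).2 (f v).2.
Proof. by rewrite -bruhatE. Qed.

Let bot := Bint_of (rk_le1 w).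
Let x0 := (f bot).2.

Lemma leX_x0 u : leX x0 (f u).2.
Proof. by have [_] := (f_rk_le bot u).1 (rk_le1 _). Qed.

Lemma f_bot : (f bot).1 = false.
Proof.
case E: (f bot).1 => //; case: ((f_rk_le bot (g (false, x0))).1 (rk_le1 _)).
by rewrite gK E.
Qed.

Lemma prism_atom : exists i (siw : rk_le (sigma n i) w),
  0 < i < n /\ f (Bint_of siw) = (true, x0).
Proof.
have [_ leX_anti _] := leX_order; set a := g (true, x0).
have aw : rk_le (sval a) w by apply/bruhatE; exact: (svalP a).
have [[|i r] ra] := reduced_word_exists (sval a).
  have a_bot : a = bot by apply: sval_inj; case: ra => _ /= <-.
  by move: f_bot; rewrite -a_bot /a gK.
have iv : 0 < i < n by case: ra => /andP[].
have sia : rk_le (sigma n i) (sval a).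
  by have := subword_rk_le ra (prefix_subseq [:: i] r); rewrite word_perm1.
have siw := rk_le_trans sia aw; exists i, siw; split=> //.
have [_] := (f_rk_le (Bint_of siw) a).1 sia; rewrite gK => /leX_anti/(_ (leX_x0 _)) e2.
rewrite [f _]surjective_pairing e2; congr pair; case E: (f (Bint_of siw)).1 => //.
have : Bint_of siw = bot.
  by apply: (can_inj fK); rewrite [f _]surjective_pairing [f bot]surjective_pairing E e2 f_bot.
by move/(congr1 sval) => /= /eqP; rewrite (negPf (sigma_neq1 iv)).
Qed.

Lemma prism_braid_free i (siw : rk_le (sigma n i) w) sw : 0 < i < n ->
  f (Bint_of siw) = (true, x0) -> reduced_word w sw ->
  forall k, adjacent i k -> subseq [:: i; k] sw -> subseq [:: k; i] sw -> False.
Proof.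
have [leX_refl _ _] := leX_order.
move=> iv fsi rsw k ik sik ski; have ki : adjacent k i by rewrite adjacentC.
have kv : 0 < k < n.
  by case: rsw => /allP vsw _ _; apply: vsw; apply: (mem_subseq ski); rewrite mem_head.
have skw : rk_le (sigma n k) w.
  by have := subword_rk_le rsw (subseq_trans (prefix_subseq [:: k] [:: i]) ski); rewrite word_perm1.
set si := Bint_of siw; set sk := Bint_of skw.
have fsk : (f sk).1 = false.
  case E: (f sk).1 => //; have := (f_rk_le si sk).2; rewrite fsi E.
  move=> /(_ (conj isT (leX_x0 _))) /(rk_le_sigma kv iv) ik_eq.
  by move: ik; rewrite ik_eq /adjacent; lia.
(* j is the join of s_i and s_k; it lies below both s_i s_k and s_k s_i *)
set j := g (true, (f sk).2).
have below_j (U : Bint w) : rk_le (sigma n i) (sval U) -> rk_le (sigma n k) (sval U) ->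
    rk_le (sval j) (sval U).
  move=> iU kU; have [fU1 _] := (f_rk_le si U).1 iU; have [_ fU2] := (f_rk_le sk U).1 kU.
  by apply/(f_rk_le j U); rewrite gK; move: fU1; rewrite fsi.
have ij : rk_le (sigma n i) (sval j).
  by apply/(f_rk_le si j); rewrite fsi gK; split=> //; apply: leX_x0.
have kj : rk_le (sigma n k) (sval j).
  by apply/(f_rk_le sk j); rewrite fsk gK; split=> //; apply: leX_refl.
have [iik kik] := rk_le_sigma_word2 iv kv ik.
have [kki iki] := rk_le_sigma_word2 kv iv ki.
have j_ik := rk_le_adjacent_top iv kv ik ij kj
  (below_j (Bint_of (subword_rk_le rsw sik)) iik kik).
have j_ki := rk_le_adjacent_top kv iv ki kj ij
  (below_j (Bint_of (subword_rk_le rsw ski)) iki kki).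
by move: (adjacent_noncomm iv kv ik); rewrite -!word_perm2 -j_ik -j_ki eqxx.
Qed.

End PrismAtom.

Lemma prism_unconfined n (w : {perm 'I_n}) :
  prism w -> exists i s, reduced_word w s /\ unconfined_in s i.
Proof.
case=> X [leX [f [leX_order [g fK gK] f_iso]]].
have [i [siw [iv fsi]]] := prism_atom leX_order fK gK f_iso.
have [sw rsw] := reduced_word_exists w.
exists i, sw; split=> //; apply: (unconfined_braid_free rsw).
  exact: mem_reduced_rk_le_sigma rsw iv siw.
exact: (prism_braid_free leX_order gK f_iso iv fsi rsw).
Qed.

(** * An unconfined letter makes a prism *)

Section RankRectangle.
Variable n : nat.
Implicit Types (u : {perm 'I_n}).

(* [u * tperm c d] is [u] with the values [c] and [d] exchanged. *)
Lemma rk_mul_tperm u (c d : 'I_n) (P v : nat) : c < d -> u^-1 c < u^-1 d ->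
  rk (u * tperm c d) P v = rk u P v + [&& u^-1 c < P, P <= u^-1 d, c < v & v <= d].
Proof.
move=> cd ucd; have ucNd : u^-1 c != u^-1 d by rewrite -(inj_eq val_inj) neq_ltn ucd.
have agree (Q : 'I_n) : Q != u^-1 c -> Q != u^-1 d ->
    ((Q < P) && (v <= (u * tperm c d)%g Q) : nat) = (Q < P) && (v <= u Q).
  move=> Qc Qd; rewrite permM tpermD //.
    by apply: contraNneq Qc => ->; rewrite permK.
  by apply: contraNneq Qd => ->; rewrite permK.
have := sum_agree_off2 ucNd agree; rewrite /= !permM !permKV tpermL tpermR.
rewrite -/(rk _ P v) -/(rk u P v); set m := rk (u * _) P v; move: cd ucd.
by case: (ltnP (u^-1 c) P); case: (ltnP (u^-1 d) P); case: (leqP v c); case: (leqP v d) => /=; lia.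
Qed.

Lemma sum_perm_lt u (v : nat) : (\sum_(Q : 'I_n) (u Q < v : nat) = minn v n)%N.
Proof.
rewrite (reindex_inj (@perm_inj _ u^-1)) /=.
by under eq_bigr do rewrite permKV; apply: sum_lt_ord.
Qed.

Lemma rk_lower u (P v : nat) : P <= n -> P <= rk u P v + v.
Proof.
move=> Pn; have : \sum_(Q : 'I_n) (Q < P : nat) <= rk u P v + \sum_(Q : 'I_n) (u Q < v : nat).
  rewrite /rk -big_split /=; apply: leq_sum => Q _.
  by case: (ltnP Q P); case: (leqP v (u Q)).
by rewrite sum_perm_lt sum_lt_ord; lia.
Qed.

Lemma rk_val u (c : 'I_n) (P : nat) : rk u P c = rk u P c.+1 + (u^-1 c < P).
Proof.
rewrite /rk (bigD1 (u^-1 c)) //= [in X in _ = X + _](bigD1 (u^-1 c)) //= permKV leqnn ltnn.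
rewrite andbF /= add0n andbT addnC; congr (_ + _); apply: eq_bigr => Q Qc.
have : u Q != c by apply: contraNneq Qc => <-; rewrite permK.
by rewrite -(inj_eq val_inj) /= => uQc; rewrite [c <= _]leq_eqVlt eq_sym (negPf uQc).
Qed.

End RankRectangle.

Lemma word_perm_fix n t (x : 'I_n) : valid_word n t ->
  (forall l, l \in t -> (l != x.+1) && (l != x)) -> word_perm n t x = x.
Proof.
elim: t => [|l t IH] /=; first by rewrite perm1.
case/andP => lv vt far; rewrite permM IH //; last first.
  by move=> l' l't; apply: far; rewrite inE l't orbT.
apply: val_inj; rewrite /= (sigma_val x lv).
by have := far l (mem_head _ _); move: lv; repeat case: eqP => //=; lia.
Qed.

Section Young.
Variables (n i : nat).
Hypothesis iv : 0 < i < n.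
Implicit Types (p q u : {perm 'I_n}).

Definition in_young p := forall Q : 'I_n, (Q < i) = (p Q < i).

Lemma in_youngV p : in_young p -> forall c : 'I_n, (c < i) = (p^-1 c < i).
Proof. by move=> yp c; rewrite (yp (p^-1 c)) permKV. Qed.

Lemma in_young_word t : valid_word n t -> i \notin t -> in_young (word_perm n t).
Proof.
elim: t => [|l t IH] /=; first by move=> _ _ Q; rewrite perm1.
case/andP => lv vt; rewrite inE negb_or => /andP[il it] Q.
rewrite permM (IH vt it Q) (sigma_val _ lv).
by move: il iv lv; repeat case: eqP => //=; lia.
Qed.

Lemma rk_young_lo p (P v : nat) : in_young p -> P <= i -> i <= v -> rk p P v = 0.
Proof.
move=> yp Pi iv0; apply: big1 => Q _; case: (ltnP Q P) => //= QP.
have : Q < i by lia.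
by rewrite yp => pQi; rewrite leqNgt (leq_trans pQi iv0).
Qed.

Lemma rk_young_hi p (P v : nat) : in_young p -> v <= i -> i <= P -> P <= n ->
  rk p P v + v = P.
Proof.
move=> yp vi iP Pn; apply/eqP; rewrite eqn_leq rk_lower // andbT.
have : rk p P v + \sum_(Q : 'I_n) (p Q < v : nat) <= \sum_(Q : 'I_n) (Q < P : nat).
  rewrite /rk -big_split /=; apply: leq_sum => Q _.
  case: (ltnP (p Q) v) => pQv; case: (ltnP Q P) => QP //=.
  have : p Q < i by lia.
  by rewrite -yp; lia.
by rewrite sum_perm_lt sum_lt_ord; lia.
Qed.

Section Raise.
(* the two points exchanged by [sigma n i], letters being 1-indexed *)
Variables (im1 oi : 'I_n) (fa fb : bool).
Hypotheses (e_im1 : im1 = i.-1 :> nat) (e_oi : oi = i :> nat).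

Lemma im1_lt : im1 < i.
Proof. by rewrite e_im1; lia. Qed.

Lemma sigma_i : sigma n i = tperm im1 oi.
Proof. by apply: sigmaE; rewrite ?e_im1 ?e_oi //; lia. Qed.

(* Inserting the letter i: [word_perm (x ++ i :: y) = raise (word_perm (x ++ y))]
   when [fa] (resp. [fb]) records that i-1 (resp. i+1) does not occur in [x]. *)
Definition raise_lo p : 'I_n := if fa then im1 else p im1.
Definition raise_hi p : 'I_n := if fb then oi else p oi.
Definition raise p := p * tperm (raise_lo p) (raise_hi p).

Lemma raise_loP p : in_young p -> [/\ raise_lo p < i, p^-1 (raise_lo p) < i &
  raise_lo p = i.-1 :> nat \/ p^-1 (raise_lo p) = i.-1 :> nat].
Proof.
move=> yp; rewrite /raise_lo; case: fa; rewrite ?permK -?yp -?in_youngV // im1_lt e_im1.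
  by split=> //; left.
by split=> //; right.
Qed.

Lemma raise_hiP p : in_young p -> [/\ i <= raise_hi p, i <= p^-1 (raise_hi p) &
  raise_hi p = i :> nat \/ p^-1 (raise_hi p) = i :> nat].
Proof.
move=> yp; have oiNlt : (oi < i) = false by rewrite e_oi ltnn.
rewrite /raise_hi !(leqNgt i); case: fb; rewrite ?permK -?yp -?in_youngV // oiNlt e_oi.
  by split=> //; left.
by split=> //; right.
Qed.

Lemma rk_raise p (P v : nat) : in_young p ->
  rk (raise p) P v = rk p P v +
    [&& p^-1 (raise_lo p) < P, P <= p^-1 (raise_hi p), raise_lo p < v & v <= raise_hi p].
Proof.
move=> yp; have [lo1 lo2 _] := raise_loP yp; have [hi1 hi2 _] := raise_hiP yp.
by apply: rk_mul_tperm; lia.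
Qed.

Lemma rk_le_raise p : in_young p -> rk_le p (raise p).
Proof. by move=> yp P v; rewrite rk_raise // leq_addr. Qed.

Lemma raise_not_rk_le p q : in_young p -> in_young q -> ~ rk_le (raise p) q.
Proof.
move=> yp yq pq; have := pq i i; rewrite rk_raise // (rk_young_lo yq) // (rk_young_lo yp) //.
have [lo1 lo2 _] := raise_loP yp; have [hi1 hi2 _] := raise_hiP yp.
by rewrite lo1 lo2 hi1 hi2.
Qed.

Lemma rk_le_of_rk_le_raise p q : in_young p -> in_young q -> rk_le p (raise q) -> rk_le p q.
Proof.
move=> yp yq pq P v; have := pq P v; rewrite rk_raise //.
have [lo1 lo2 lo3] := raise_loP yq; have [hi1 hi2 hi3] := raise_hiP yq.
case: and4P => [[r1 r2 r3 r4] _ | _]; last by rewrite addn0.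
have Pn : P <= n by have := ltn_ord (q^-1 (raise_hi q)); lia.
(* a corner of the rectangle lies on row or column i *)
have [/andP[Pi iv0] | /andP[vi iP]] : (P <= i <= v) \/ (v <= i <= P) by lia.
  by rewrite (rk_young_lo yp).
by have := rk_young_hi yp vi iP Pn; have := rk_lower q v Pn; lia.
Qed.

Lemma rk_le_young_pos_im1 p q : in_young p -> in_young q -> rk_le p q ->
  q^-1 im1 <= p^-1 im1.
Proof.
move=> yp yq pq; have Pi : (p^-1 im1).+1 <= i by rewrite -in_youngV // im1_lt.
have rkE u : in_young u -> rk u (p^-1 im1).+1 im1 = (u^-1 im1 < (p^-1 im1).+1).
  by move=> yu; rewrite rk_val (rk_young_lo yu) //; lia.
by have := pq (p^-1 im1).+1 im1; rewrite !rkE // ltnSn lt0b ltnS.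
Qed.

Lemma rk_le_young_pos_oi p q : in_young p -> in_young q -> rk_le p q ->
  p^-1 oi <= q^-1 oi.
Proof.
move=> yp yq pq; have iP : i <= (q^-1 oi).+1 by apply: leqW; rewrite leqNgt -in_youngV // e_oi ltnn.
have rkE u : in_young u ->
    rk u (q^-1 oi).+1 oi.+1 + (u^-1 oi < (q^-1 oi).+1) + i = (q^-1 oi).+1.
  by move=> yu; rewrite -rk_val e_oi rk_young_hi.
have := pq (q^-1 oi).+1 oi.+1; have := rkE p yp; have := rkE q yq; rewrite ltnSn.
by rewrite -ltnS; case: ltnP => //= _; lia.
Qed.

Lemma rk_le_young_val_im1 p q : in_young p -> in_young q -> rk_le p q -> q im1 <= p im1.
Proof.
move=> yp yq pq; have vi : (p im1).+1 <= i by rewrite -yp im1_lt.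
have rkE u : in_young u ->
    rk u im1 (p im1).+1 + ((p im1).+1 <= u im1) + (p im1).+1 = i.
  move=> yu; rewrite -rkS (_ : (im1 : nat).+1 = i) ?rk_young_hi //; lia.
have := pq im1 (p im1).+1; have := rkE p yp; have := rkE q yq; rewrite ltnn.
by rewrite -ltnS; case: leqP => //= _; lia.
Qed.

Lemma rk_le_young_val_oi p q : in_young p -> in_young q -> rk_le p q -> p oi <= q oi.
Proof.
move=> yp yq pq; have ipoi : i <= p oi by rewrite leqNgt -yp e_oi ltnn.
have rkE u : in_young u -> rk u oi.+1 (p oi) = (p oi <= u oi).
  by move=> yu; rewrite rkS (rk_young_lo yu) ?e_oi.
by have := pq oi.+1 (p oi); rewrite !rkE // leqnn lt0b.
Qed.

Lemma raise_rk_le p q : in_young p -> in_young q -> rk_le p q -> rk_le (raise p) (raise q).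
Proof.
move=> yp yq pq P v; rewrite !rk_raise //; apply: leq_add (pq P v) _.
case: and4P => // [[r1 r2 r3 r4]]; rewrite lt0b; apply/and4P; split.
- move: r1; rewrite /raise_lo; case: fa; last by rewrite !permK.
  exact: leq_ltn_trans (rk_le_young_pos_im1 yp yq pq).
- move: r2; rewrite /raise_hi; case: fb; last by rewrite !permK.
  by move/leq_trans; apply; apply: rk_le_young_pos_oi.
- move: r3; rewrite /raise_lo; case: fa => //.
  exact: leq_ltn_trans (rk_le_young_val_im1 yp yq pq).
- move: r4; rewrite /raise_hi; case: fb => //.
  by move/leq_trans; apply; apply: rk_le_young_val_oi.
Qed.

Lemma word_perm_im1 t : valid_word n t -> i \notin t -> i.-1 \notin t ->
  word_perm n t im1 = im1.
Proof.
move=> vt it i1t; apply: word_perm_fix => // l lt; rewrite e_im1 prednK; last by lia.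
by apply/andP; split; [apply: contraNneq it | apply: contraNneq i1t] => <-.
Qed.

Lemma word_perm_oi t : valid_word n t -> i \notin t -> i.+1 \notin t ->
  word_perm n t oi = oi.
Proof.
move=> vt it i1t; apply: word_perm_fix => // l lt; rewrite e_oi.
by apply/andP; split; [apply: contraNneq i1t | apply: contraNneq it] => <-.
Qed.

Lemma word_perm_insert x y : valid_word n x -> valid_word n y -> i \notin x -> i \notin y ->
  (if fa then i.-1 \notin x else i.-1 \notin y) ->
  (if fb then i.+1 \notin x else i.+1 \notin y) ->
  word_perm n (x ++ i :: y) = raise (word_perm n (x ++ y)).
Proof.
move=> vx vy ix iy ca cb; set X := word_perm n x; set Y := word_perm n y.
have lo : raise_lo (word_perm n (x ++ y)) = X im1.
  by rewrite /raise_lo word_perm_cat; case: fa ca => ca; rewrite ?permM word_perm_im1.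
have hi : raise_hi (word_perm n (x ++ y)) = X oi.
  by rewrite /raise_hi word_perm_cat; case: fb cb => cb; rewrite ?permM word_perm_oi.
rewrite /raise lo hi -tpermJ conjgE !word_perm_cat /= -/Y -/X sigma_i.
by rewrite -!mulgA mulVKg.
Qed.

Section Decomposition.
Variables (w : {perm 'I_n}) (x y : seq nat).
Hypothesis rs : reduced_word w (x ++ i :: y).
Hypotheses (ix : i \notin x) (iy : i \notin y).
Hypotheses (fa_x : fa = (i.-1 \notin x)) (fb_x : fb = (i.+1 \notin x)).
Hypotheses (im1_once : i.-1 \in x -> i.-1 \notin y) (ip1_once : i.+1 \in x -> i.+1 \notin y).

Lemma subword_raise t : subseq t (x ++ i :: y) -> exists p,
  [/\ in_young p, rk_le p w, rk_le (raise p) w & word_perm n t = p \/ word_perm n t = raise p].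
Proof.
case/subseq_catP => x' [t2 [-> x'x /subseq_consP t2y]].
have [y' y'y et2] : exists2 y', subseq y' y & t2 = y' \/ t2 = i :: y'.
  by case: t2y => [t2y | [y' -> y'y]]; [exists t2; [|left] | exists y'; [|right]].
have vs : valid_word n (x ++ i :: y) by case: rs.
have [vx vy] : valid_word n x /\ valid_word n y.
  by move: vs; rewrite valid_word_cat => /andP[vx /andP[_ vy]].
have vx' := valid_word_subseq x'x vx; have vy' := valid_word_subseq y'y vy.
have ix' : i \notin x' by apply: contra ix; apply: mem_subseq.
have iy' : i \notin y' by apply: contra iy; apply: mem_subseq.
have ins : word_perm n (x' ++ i :: y') = raise (word_perm n (x' ++ y')).
  apply: word_perm_insert => //; rewrite ?fa_x ?fb_x; case: ifPn => [xi | /negbNE xi].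
  - by apply: contra xi; apply: mem_subseq.
  - by apply: contra (im1_once xi); apply: mem_subseq.
  - by apply: contra xi; apply: mem_subseq.
  - by apply: contra (ip1_once xi); apply: mem_subseq.
exists (word_perm n (x' ++ y')); split.
- by apply: in_young_word; rewrite ?valid_word_cat ?vx' ?vy' // mem_cat negb_or ix'.
- apply: (subword_rk_le rs); apply: cat_subseq x'x _.
  exact: subseq_trans y'y (subseq_cons y i).
- by rewrite -ins; apply: (subword_rk_le rs); apply: cat_subseq; rewrite //= eqxx.
- by case: et2 => ->; [left | right].
Qed.

Lemma raise_rk_le_w p : in_young p -> rk_le p w -> rk_le (raise p) w.
Proof.
move=> yp pw; have [t ts /reduced_wordE[_ tp _]] := rk_le_subword rs pw.
have [q [yq qw rqw [tq | tq]]] := subword_raise ts; rewrite tq in tp; subst p => //.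
by case: (raise_not_rk_le yq yp (rk_le_refl _)).
Qed.

Definition young_interval := {p : {perm 'I_n} | rk_le p w /\ in_young p}.

Definition glue (z : bool * young_interval) : {perm 'I_n} :=
  if z.1 then raise (sval z.2) else sval z.2.

Lemma glue_rk_le_w z : rk_le (glue z) w.
Proof. by case: z => [[] [p [pw yp]]] //=; apply: raise_rk_le_w. Qed.

Lemma glue_rk_le z1 z2 :
  rk_le (glue z1) (glue z2) <-> le2 z1.1 z2.1 /\ rk_le (sval z1.2) (sval z2.2).
Proof.
case: z1 z2 => [b1 [p [pw yp]]] [b2 [q [qw yq]]]; rewrite /glue /le2 /=.
case: b1; case: b2 => /=; split=> //.
- move=> pq; split=> //; apply: (rk_le_of_rk_le_raise yp yq).
  exact: rk_le_trans (rk_le_raise yp) pq.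
- by case=> _ pq; apply: raise_rk_le.
- by move/(raise_not_rk_le yp yq).
- by case.
- by move=> pq; split=> //; apply: (rk_le_of_rk_le_raise yp yq).
- by case=> _ pq; apply: rk_le_trans pq (rk_le_raise yq).
- by case.
Qed.

Lemma glue_surj u : rk_le u w -> exists z, glue z = u.
Proof.
move=> uw; have [t ts /reduced_wordE[_ tu _]] := rk_le_subword rs uw.
have [p [yp pw _ tp]] := subword_raise ts.
pose pY : young_interval := exist _ p (conj pw yp).
by case: tp => tp; [exists (false, pY) | exists (true, pY)]; rewrite /glue /= -tp.
Qed.

Lemma glue_inj : injective glue.
Proof.
move=> [b1 p] [b2 q] e.
have [b12 pq] := (glue_rk_le (b1, p) (b2, q)).1 (ltac:(rewrite e; apply: rk_le_refl)).
have [b21 qp] := (glue_rk_le (b2, q) (b1, p)).1 (ltac:(rewrite e; apply: rk_le_refl)).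
rewrite /= in b12 pq b21 qp; congr pair; last by apply: sval_inj; apply: rk_le_anti.
by move: b12 b21; rewrite /le2; clear e; case: b1; case: b2.
Qed.

Lemma prism_of_raise : prism w.
Proof.
have glue_onto (u : Bint w) : {z | glue z = sval u}.
  by apply: constructive_indefinite_description; apply/glue_surj/bruhatE/(svalP u).
pose f (u : Bint w) := sval (glue_onto u).
have fK (u : Bint w) : glue (f u) = sval u := svalP (glue_onto u).
exists young_interval, (fun p q : young_interval => rk_le (sval p) (sval q)), f; split.
- split=> [p | p q pq qp | p q r]; first exact: rk_le_refl.
    by apply: sval_inj; apply: rk_le_anti.
  exact: rk_le_trans.
- exists (fun z => Bint_of (glue_rk_le_w z)) => [u | z]; first by apply: sval_inj; rewrite /= fK.
  by apply: glue_inj; rewrite fK.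
- by move=> u v; rewrite bruhatE -!fK glue_rk_le.
Qed.

End Decomposition.

End Raise.

End Young.

Lemma unconfined_prism n (w : {perm 'I_n}) s i :
  reduced_word w s -> unconfined_in s i -> prism w.
Proof.
move=> rs [cnt Nb_succ Nb_pred]; have i_s : i \in s by rewrite -has_pred1 has_count cnt.
have iv : 0 < i < n by case: rs => /allP vs _ _; apply: vs.
have [x [y [es ix]]] := split_first i_s.
have iy : i \notin y.
  by apply/count_memPn; move: cnt; rewrite es count_cat /= eqxx (count_memPn ix) => [[]].
have idx : index i s = size x by rewrite es index_cat (negPf ix) /= eqxx addn0.
have i1n : i.-1 < n by lia.
rewrite es in rs.
apply: (@prism_of_raise n i iv (Ordinal i1n) (Ordinal (andP iv).2) _ _ erefl erefl w x y rs
  ix iy erefl erefl).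
  by move=> xi1; apply/negP => yi1; apply: Nb_pred; rewrite idx es; apply: mem_between.
by move=> xi1; apply/negP => yi1; apply: Nb_succ; rewrite idx es; apply: mem_between.
Qed.

Theorem theorem2p11 (n : nat) (w : {perm 'I_n}) :
  prism w <->
  exists (i : nat) (s : seq nat), reduced_word w s /\ unconfined_in s i.
Proof.
split; first exact: prism_unconfined.
by case=> i [s [rs unc]]; apply: unconfined_prism rs unc.
Qed.
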